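(* The AMC (allocating marginal contributions) policy is temporal Nash stable.
   Context: Players: a finite set $N=\{a_1,\dots,a_n\}$. A characteristic function is $v:2^N\to\mathbb{R}_{\ge 0}$ with $v(\emptyset)=0$, monotone and bounded: $\mathsf{min}\le v(S)\le v(T)\le\mathsf{max}$ for all nonempty $S\subseteq T\subseteq N$, for fixed constants $0<\mathsf{min}\le\mathsf{max}$. Online process: an arrival order is a permutation $\pi=(\pi_1,\dots,\pi_n)$ of $N$; player $\pi_t$ arrives at time $t$; $\pi_{\prec t}$ is the set of players arriving before time $t$ and $\pi^{-1}(i)$ the arrival time of $i$. For $S\subseteq N$, $\pi_{|S}$ denotes the players of $S$ in the relative order of $\pi$. Let $C^{t-1}$ be the coalition structure of players arrived before time $t$ ($C^0=\emptyset$). At time $t$, player $\pi_t$ either joins an existing coalition $S\in C^{t-1}$ or forms $\{\pi_t\}$ (choice $S=\emptyset$); decisions are never revised. AMC policy: for a coalition $S$ and $i\in S$, $\varphi_i(S,\pi_{|S})=v((\pi_{\prec\pi^{-1}(i)}\cap S)\cup\{i\})-v(\pi_{\prec\pi^{-1}(i)}\cap S)$. Greedy players: $\pi_t$ chooses $S\in C^{t-1}\cup\{\emptyset\}$ maximizing $\varphi_{\pi_t}(S\cup\{\pi_t\},\pi_{|S\cup\{\pi_t\}})$ (predetermined tie-breaking). $C_g^t$ is the structure after time $t$ and $C_g=C_g^n$ the final one. For a time $t$, $\overline{C}_g^{t}\subseteq C_g$ denotes the set of coalitions of the final structure $C_g$ whose first-arriving member arrived at time at most $t$. Temporal Nash stability: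 for every $v$ and $\pi$, every $S\in C_g$ and every $i\in S$, there is no $S'\in\overline{C}_g^{\pi^{-1}(i)-1}\cup\{\emptyset\}$ with $\varphi_i(S'\cup\{i\},\pi_{|S'\cup\{i\}})>\varphi_i(S,\pi_{|S})$. *)

From mathcomp Require Import all_boot all_order all_algebra.
From mathcomp Require Import fingroup perm.
Set Implicit Arguments. Unset Strict Implicit. Unset Printing Implicit Defensive.
Import Order.TTheory GRing.Theory Num.Theory.
Local Open Scope ring_scope.

(* Players are 'I_n.  An arrival order is a permutation pi : {perm 'I_n};
   pi t is the player arriving at (0-based) time t, and (pi^-1 i : nat) is the
   (0-based) arrival time of player i. *)

Section Defs.
Variables (R : realFieldType) (n : nat).
Implicit Types (v : {set 'I_n} -> R) (pi : {perm 'I_n}) (S : {set 'I_n}).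

Definition char_fun (mn mx : R) v : Prop :=
  [/\ v set0 = 0, 0 < mn, mn <= mx &
      forall S T : {set 'I_n}, S != set0 -> S \subset T -> mn <= v S /\ v S <= v T /\ v T <= mx].

Definition before pi (i : 'I_n) : {set 'I_n} :=
  [set j | (pi^-1 j < pi^-1 i)%N]%g.

Definition amc v pi S (i : 'I_n) : R :=
  v ((before pi i :&: S) :|: [set i]) - v (before pi i :&: S).

(* One greedy step: player x = pi t joins S in C (or forms a new coalition,
   S = set0), where S maximizes the AMC payoff of x; C' is the new structure. *)
Definition greedy_step v pi (x : 'I_n) (C C' : {set {set 'I_n}}) : Prop :=
  exists S, [/\ S \in C \/ S = set0,
    (forall S', S' \in C \/ S' = set0 ->
       amc v pi (S' :|: [set x]) x <= amc v pi (S :|: [set x]) x) &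
    C' = (C :\ S) :|: [set S :|: [set x]]].

Definition greedy_run v pi (C : nat -> {set {set 'I_n}}) : Prop :=
  C 0%N = set0 /\ forall t : 'I_n, greedy_step v pi (pi t) (C t) (C t.+1).

(* Coalitions of Cg whose first-arriving member arrived at (1-based) time <= t,
   i.e. at 0-based time < t. *)
Definition Cbar pi (Cg : {set {set 'I_n}}) (t : nat) : {set {set 'I_n}} :=
  [set S in Cg | [exists j in S, (pi^-1 j < t)%N]%g].

Definition temporal_nash_stable v pi (Cg : {set {set 'I_n}}) : Prop :=
  forall S, S \in Cg -> forall i, i \in S ->
    ~ exists S', (S' \in Cbar pi Cg (pi^-1 i)%g \/ S' = set0) /\
                 amc v pi S i < amc v pi (S' :|: [set i]) i.

End Defs.

From mathcomp Require Import all_boot all_order all_algebra.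
From mathcomp Require Import fingroup perm.
Import Order.TTheory GRing.Theory Num.Theory.
Local Open Scope ring_scope.
Set Implicit Arguments. Unset Strict Implicit. Unset Printing Implicit Defensive.

(* In the online process the coalition structure at time t is the trace of
   the final structure on the first t arrivals.  Hence, when player i arrived,
   the trace of any final coalition S' on the earlier arrivals was an existing
   coalition or empty, and i's AMC payoff in S' with i added depends only on
   that trace.  The greedy choice of i therefore already dominated every
   deviation. *)

Definition arrived_before n (pi : {perm 'I_n}) (t : nat) : {set 'I_n} :=
  [set j | ((pi^-1)%g j < t)%N].

Section ArrivedBefore.
Variables (n : nat) (pi : {perm 'I_n}).
Local Notation P := (arrived_before pi).

Lemma arrived_beforeS t : P t \subset P t.+1.
Proof. by apply/subsetP => j; rewrite !inE; apply: ltnW. Qed.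

Lemma arrived_before_n : P n = setT.
Proof. by apply/setP => j; rewrite !inE ltn_ord. Qed.

Lemma arrival_in_arrived_before (t : 'I_n) s : (pi t \in P s) = (t < s)%N.
Proof. by rewrite inE permK. Qed.

Lemma arrival_trace {t : 'I_n} {T : {set 'I_n}} :
  T \subset P t -> (T :|: [set pi t]) :&: P t = T.
Proof.
move=> T_sub; rewrite setIUl (setIidPl T_sub).
suff -> : [set pi t] :&: P t = set0 by rewrite setU0.
by apply/disjoint_setI0; rewrite disjoints1 arrival_in_arrived_before ltnn.
Qed.

Lemma beforeE (i : 'I_n) : before pi i = P ((pi^-1)%g i).
Proof. by []. Qed.

Lemma before_setU1 (i : 'I_n) S : before pi i :&: (S :|: [set i]) = before pi i :&: S.
Proof. by apply/setP => j; rewrite !inE; case: eqVneq => [->|]; rewrite ?ltnn ?orbF. Qed.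

Lemma amc_trace (R : realFieldType) (v : {set 'I_n} -> R) (i : 'I_n) S :
  amc v pi S i = amc v pi ((before pi i :&: S) :|: [set i]) i.
Proof. by rewrite /amc before_setU1 setIA setIid. Qed.

End ArrivedBefore.

Section OnlineRun.
Variables (n : nat) (pi : {perm 'I_n}) (C : nat -> {set {set 'I_n}}).
Local Notation P := (arrived_before pi).

Hypothesis C0 : C 0%N = set0.
Hypothesis C_join : forall t : 'I_n, exists2 T, T \in C t \/ T = set0 &
  C t.+1 = (C t :\ T) :|: [set T :|: [set pi t]].

Lemma online_coalition_sub t U : (t <= n)%N -> U \in C t -> U \subset P t.
Proof.
elim: t U => [|t IH] U le_tn; first by rewrite C0 inE.
have sub_PS V : V \in C t -> V \subset P t.+1.
  by move/(IH V (ltnW le_tn))/subset_trans; apply; apply: arrived_beforeS.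
have [T T_opt ->] := C_join (Ordinal le_tn).
rewrite !inE => /orP[/andP[_ /sub_PS] // | /eqP->].
rewrite subUset sub1set arrival_in_arrived_before ltnSn andbT.
by case: T_opt => [/sub_PS|->] //; apply: sub0set.
Qed.

Lemma online_choice_sub {t : 'I_n} {T : {set 'I_n}} :
  T \in C t \/ T = set0 -> T \subset P t.
Proof. by case=> [/online_coalition_sub->|->] //; [apply: ltnW | apply: sub0set]. Qed.

Lemma online_restrictS (t : 'I_n) U :
  U \in C t.+1 -> U :&: P t \in C t \/ U :&: P t = set0.
Proof.
have [T T_opt ->] := C_join t.
rewrite !inE => /orP[/andP[_ CtU] | /eqP->].
  by left; rewrite (setIidPl (online_coalition_sub (ltnW (ltn_ord t)) CtU)).
by rewrite arrival_trace //; apply: online_choice_sub.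
Qed.

Lemma online_restrict t S : (t <= n)%N -> S \in C n ->
  S :&: P t \in C t \/ S :&: P t = set0.
Proof.
move=> le_tn CnS; have [d] : exists d, (t + d)%N = n by exists (n - t)%N; apply: subnKC.
elim: d t {le_tn} => [|d IH] t def_n.
  by rewrite addn0 in def_n; subst t; left; rewrite arrived_before_n setIT.
have lt_tn : (t < n)%N by rewrite -def_n addnS ltnS leq_addr.
have -> : S :&: P t = (S :&: P t.+1) :&: P t.
  by rewrite -setIA (setIidPr (arrived_beforeS _ _)).
case: (IH t.+1); first by rewrite addSnnS.
  exact: (@online_restrictS (Ordinal lt_tn)).
by move=> ->; right; rewrite set0I.
Qed.

Lemma online_restrict_joined (t : 'I_n) T S :
    T \in C t \/ T = set0 -> C t.+1 = (C t :\ T) :|: [set T :|: [set pi t]] ->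
  S \in C n -> pi t \in S -> S :&: P t = T.
Proof.
move=> T_opt Ct1 CnS tS.
have tP : pi t \in P t.+1 by rewrite arrival_in_arrived_before.
have [|S1_0] := @online_restrict t.+1 S (ltn_ord t) CnS; last first.
  by move: (in_set0 (pi t)); rewrite -S1_0 inE tS tP.
rewrite Ct1 !inE => /orP[/andP[_ /(online_coalition_sub (ltnW (ltn_ord t)))] | /eqP S1E].
  move=> /subsetP/(_ (pi t)); rewrite inE tS tP arrival_in_arrived_before ltnn.
  by move/(_ isT).
rewrite -(arrival_trace (online_choice_sub T_opt)) -S1E -setIA.
by rewrite (setIidPr (arrived_beforeS _ _)).
Qed.

End OnlineRun.

Theorem proposition3 (R : realFieldType) (n : nat) (mn mx : R)
    (v : {set 'I_n} -> R) (pi : {perm 'I_n}) (C : nat -> {set {set 'I_n}}) :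
  char_fun mn mx v ->
  greedy_run v pi C ->
  temporal_nash_stable v pi (C n).
Proof.
move=> _ [C0 C_greedy] S CnS i iS [S' [S'_opt lt_dev]].
have C_join (t : 'I_n) : exists2 T, T \in C t \/ T = set0 &
    C t.+1 = (C t :\ T) :|: [set T :|: [set pi t]].
  by have [T [T_opt _ ->]] := C_greedy t; exists T.
set t := (pi^-1)%g i.
have [T [T_opt T_max Ct1]] := C_greedy t.
have ST : before pi i :&: S = T.
  rewrite setIC beforeE (online_restrict_joined C0 C_join T_opt Ct1 CnS) //.
  by rewrite permKV.
rewrite permKV in T_max.
have W_opt : before pi i :&: S' \in C t \/ before pi i :&: S' = set0.
  case: S'_opt => [|->]; last by right; rewrite setI0.
  rewrite inE => /andP[CnS' _]; rewrite setIC beforeE.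
  exact (online_restrict C0 C_join (ltnW (ltn_ord t)) CnS').
move: lt_dev; rewrite [amc _ _ S _]amc_trace ST.
by rewrite [amc _ _ (S' :|: _) _]amc_trace before_setU1 ltNge T_max.
Qed.
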